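(* Let $V$ be a finite-dimensional real vector space with a non-degenerate inner product $g$, and $F\in\Lambda^5V^*$ a 5-form satisfying, for all $X,Y\in V$, $\iota_XF_L\wedge\iota_YF^L=0$ and $\iota_XF_L\wedge F^L=0$. Then $\iota_Y\iota_XF_L\wedge F^L=0$ and $\iota_Z\iota_Y\iota_XF_L\wedge F^L=0$ for all $X,Y,Z\in V$.
   Context: For a basis $e_L$ of $V$, $F_L=\iota_{e_L}F$, and expressions like $\alpha_L\wedge\beta^L$ denote the contraction $\sum_{L,K}g^{LK}\alpha_L\wedge\beta_K$ with the inverse metric. $\iota_X$ is interior multiplication by $X$. *)

From HB Require Import structures.
From mathcomp Require Import all_boot all_order all_algebra all_fingroup.
From mathcomp Require Import reals.
Set Implicit Arguments. Unset Strict Implicit. Unset Printing Implicit Defensive.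
Import Order.TTheory GRing.Theory Num.Theory.
Local Open Scope ring_scope.

(* V = R^n with standard basis e_0,...,e_(n-1).  A k-form on V is given by its
   components  F t = F(e_(t 0), ..., e_(t (k-1)))  for t : 'I_k -> 'I_n. *)
Definition kform (R : realType) (n k : nat) := {ffun 'I_k -> 'I_n} -> R.

Definition permidx n k (s : 'S_k) (t : {ffun 'I_k -> 'I_n}) : {ffun 'I_k -> 'I_n} :=
  [ffun i => t (s i)].

Definition alternating (R : realType) n k (F : kform R n k) : Prop :=
  forall (s : 'S_k) t, F (permidx s t) = (-1) ^+ odd_perm s * F t.

Definition basisv (R : realType) n (L : 'I_n) : 'rV[R]_n := delta_mx 0 L.

Definition idxcons n k (j : 'I_n) (t : {ffun 'I_k -> 'I_n}) : {ffun 'I_k.+1 -> 'I_n} :=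
  [ffun i => if unlift ord0 i is Some i' then t i' else j].

Definition intp (R : realType) n k (X : 'rV[R]_n) (F : kform R n k.+1) : kform R n k :=
  fun t => \sum_(j < n) X 0 j * F (idxcons j t).

Definition wedge (R : realType) n p q (a : kform R n p) (b : kform R n q) : kform R n (p + q) :=
  fun t => ((p`! * q`!)%:R)^-1 *
    \sum_(s : 'S_(p + q)) (-1) ^+ odd_perm s *
       a [ffun i => t (s (lshift q i))] * b [ffun i => t (s (rshift p i))].

(* contraction  a_L /\ b^L = sum_(L,K) g^(LK) a_L /\ b_K  with the inverse metric *)
Definition contr (R : realType) n p q (g : 'M[R]_n)
    (a : 'I_n -> kform R n p) (b : 'I_n -> kform R n q) : kform R n (p + q) :=
  fun t => \sum_(L < n) \sum_(K < n) (invmx g) L K * wedge (a L) (b K) t.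

Definition lowerL (R : realType) n k (F : kform R n k.+1) (L : 'I_n) : kform R n k :=
  intp (basisv R L) F.

From HB Require Import structures.
From mathcomp Require Import all_boot all_order all_algebra all_fingroup.
From mathcomp Require Import reals ring.
Import Order.TTheory GRing.Theory Num.Theory.
Local Open Scope ring_scope.
Set Implicit Arguments. Unset Strict Implicit. Unset Printing Implicit Defensive.

(* The interior product is an antiderivation, ι_X (α ∧ β) = ι_X α ∧ β + (-1)^p α ∧ ι_X β
   for a p-form α, and so is its contraction with g^-1.  Applying ι_Y to the second
   hypothesis gives the first claim, the other term being the first hypothesis.  Applying
   ι_Z to the first claim reduces the second one to the vanishing of
   A(X,Y,Z) = ι_Y ι_X F_L ∧ ι_Z F^L.  Applying ι_Y to the first hypothesis, and using that
   a 3-form commutes with a 2-form and that g^-1 is symmetric, shows that A is symmetric in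
   X and Z; as interior products anticommute, A is antisymmetric in X and Y, so A = 0. *)

Lemma sum_lift_perm (V : nmodType) N (i j : 'I_N.+1) (G : 'S_N.+1 -> V) :
  \sum_(s : 'S_N.+1 | s i == j) G s = \sum_(s : 'S_N) G (lift_perm i j s).
Proof.
rewrite (reindex (lift_perm i j)); last first.
  pose ulsf i (s : 'S_N.+1) k := odflt k (unlift (s i) (s (lift i k))).
  have ulsfK i1 (s : 'S_N.+1) k: lift (s i1) (ulsf i1 s k) = s (lift i1 k).
    rewrite /ulsf; have:= neq_lift i1 k.
    by rewrite -(can_eq (permK s)) => /unlift_some[] ? ? ->.
  have inj_ulsf: injective (ulsf i _).
    move=> s; apply: can_inj (ulsf (s i) s^-1%g) _ => k'.
    by rewrite {1}/ulsf ulsfK !permK liftK.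
  exists (fun s => perm (inj_ulsf s)) => [s _ | s].
    by apply/permP=> k'; rewrite permE /ulsf lift_perm_lift lift_perm_id liftK.
  move/(s _ =P _) => si0; apply/permP=> k.
  case: (unliftP i k) => [k'|] ->; rewrite ?lift_perm_id //.
  by rewrite lift_perm_lift -si0 permE ulsfK.
by apply: eq_bigl => s; rewrite lift_perm_id eqxx.
Qed.

Section InteriorProduct.
Variables (R : realType) (n : nat).

Lemma idxcons_permidx k (j : 'I_n) (s : 'S_k) (t : {ffun 'I_k -> 'I_n}) :
  idxcons j (permidx s t) = permidx (lift_perm ord0 ord0 s) (idxcons j t).
Proof.
apply/ffunP => i; rewrite /permidx !ffunE.
case: (unliftP ord0 i) => [i'|] ->; first by rewrite lift_perm_lift liftK ffunE.
by rewrite lift_perm_id unlift_none.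
Qed.

Lemma alternating_intp k (X : 'rV[R]_n) (F : kform R n k.+1) :
  alternating F -> alternating (intp X F).
Proof.
move=> altF s t; rewrite /intp big_distrr; apply: eq_bigr => j _ /=.
by rewrite idxcons_permidx altF odd_lift_perm /= mulrCA.
Qed.

Lemma intp_eq0 k (X : 'rV[R]_n) (F : kform R n k.+1) t :
  (forall t, F t = 0) -> intp X F t = 0.
Proof. by move=> F0; rewrite /intp big1 // => j _; rewrite F0 mulr0. Qed.

Lemma idxcons_swap k (i j : 'I_n) (t : {ffun 'I_k -> 'I_n}) :
  idxcons j (idxcons i t) = permidx (tperm ord0 (lift ord0 ord0)) (idxcons i (idxcons j t)).
Proof.
apply/ffunP => m; rewrite /permidx !ffunE.
case: (unliftP ord0 m) => [m'|] -> /=; last by rewrite tpermL ?ffunE liftK ?ffunE unlift_none.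
case: (unliftP ord0 m') => [m''|] -> /=; last by rewrite tpermR ?ffunE !unlift_none.
rewrite tpermD ?neq_lift ?(inj_eq (@lift_inj _ _)) //.
by rewrite !(ffunE, liftK).
Qed.

Lemma intp_swap k (X Y : 'rV[R]_n) (F : kform R n k.+2) t :
  alternating F -> intp Y (intp X F) t = - intp X (intp Y F) t.
Proof.
move=> altF; rewrite /intp.
under eq_bigr => j _ do rewrite big_distrr.
rewrite exchange_big -sumrN; apply: eq_bigr => i _ /=.
rewrite big_distrr -sumrN; apply: eq_bigr => j _ /=.
by rewrite (idxcons_swap i j) altF odd_tperm neq_lift expr1; ring.
Qed.

End InteriorProduct.

(* [p.+1 + q] and [p + q.+1] are equal but not convertible: [castidx] transports index
   tuples along such equalities. *)
Definition castidx n m m' (e : m = m') (t : {ffun 'I_m' -> 'I_n}) : {ffun 'I_m -> 'I_n} :=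
  [ffun i => t (cast_ord e i)].

Lemma castidx_id n m (e : m = m) (t : {ffun 'I_m -> 'I_n}) : castidx e t = t.
Proof. by apply/ffunP => i; rewrite ffunE cast_ord_id. Qed.

Lemma wedge_castidx (R : realType) n p q (a : kform R n p) (b : kform R n q) m
    (e : p + q = m) (t : {ffun 'I_m -> 'I_n}) :
  wedge a b (castidx e t) = ((p`! * q`!)%:R)^-1 * \sum_(s : 'S_m) (-1) ^+ odd_perm s *
    a [ffun i => t (s (cast_ord e (lshift q i)))] * b [ffun i => t (s (cast_ord e (rshift p i)))].
Proof.
case: m / e t => t; rewrite castidx_id; congr (_ * _); apply: eq_bigr => s _.
by congr (_ * a _ * b _); apply/ffunP => i; rewrite !ffunE cast_ord_id.
Qed.

Section Leibniz.
Variables (R : realType) (n p q : nat).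
Variables (a : kform R n p.+1) (b : kform R n q.+1).
Hypotheses (alt_a : alternating a) (alt_b : alternating b).

Definition wedge_term (u : {ffun 'I_(p.+1 + q.+1) -> 'I_n}) (s : 'S_(p.+1 + q.+1)) : R :=
  (-1) ^+ odd_perm s * a [ffun i => u (s (lshift q.+1 i))] * b [ffun i => u (s (rshift p.+1 i))].

Lemma sum_wedge_term_lslot u (i : 'I_p.+1) :
  \sum_(s : 'S_(p.+1 + q.+1) | s (lshift q.+1 i) == ord0) wedge_term u s =
  \sum_(s : 'S_(p.+1 + q.+1) | s (lshift q.+1 (ord0 : 'I_p.+1)) == ord0) wedge_term u s.
Proof.
rewrite (reindex_inj (mulgI (tperm (lshift q.+1 (ord0 : 'I_p.+1)) (lshift q.+1 i)))) /=.
apply: eq_big => s; first by rewrite permM tpermR.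
move=> _; rewrite /wedge_term odd_permM odd_tperm signr_addb (inj_eq (@lshift_inj _ _)).
have -> : [ffun m => u ((tperm (lshift q.+1 ord0) (lshift q.+1 i) * s)%g (lshift q.+1 m))]
   = permidx (tperm ord0 i) [ffun m => u (s (lshift q.+1 m))].
  apply/ffunP => m; rewrite /permidx !ffunE permM.
  by rewrite -(inj_tperm _ _ _ (@lshift_inj _ _)).
have -> : [ffun m => u ((tperm (lshift q.+1 ord0) (lshift q.+1 i) * s)%g (rshift p.+1 m))]
   = [ffun m => u (s (rshift p.+1 m))].
  by apply/ffunP => m; rewrite !ffunE permM tpermD // eq_lrshift.
by rewrite alt_a odd_tperm mulrA (mulrAC ((-1) ^+ _)) -signr_addb addbb expr0 mul1r.
Qed.

Lemma sum_wedge_term_rslot u (i : 'I_q.+1) :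
  \sum_(s : 'S_(p.+1 + q.+1) | s (rshift p.+1 i) == ord0) wedge_term u s =
  \sum_(s : 'S_(p.+1 + q.+1) | s (rshift p.+1 (ord0 : 'I_q.+1)) == ord0) wedge_term u s.
Proof.
rewrite (reindex_inj (mulgI (tperm (rshift p.+1 (ord0 : 'I_q.+1)) (rshift p.+1 i)))) /=.
apply: eq_big => s; first by rewrite permM tpermR.
move=> _; rewrite /wedge_term odd_permM odd_tperm signr_addb (inj_eq (@rshift_inj _ _)).
have -> : [ffun m => u ((tperm (rshift p.+1 ord0) (rshift p.+1 i) * s)%g (rshift p.+1 m))]
   = permidx (tperm ord0 i) [ffun m => u (s (rshift p.+1 m))].
  apply/ffunP => m; rewrite /permidx !ffunE permM.
  by rewrite -(inj_tperm _ _ _ (@rshift_inj _ _)).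
have -> : [ffun m => u ((tperm (rshift p.+1 ord0) (rshift p.+1 i) * s)%g (lshift q.+1 m))]
   = [ffun m => u (s (lshift q.+1 m))].
  by apply/ffunP => m; rewrite !ffunE permM tpermD // eq_rlshift.
rewrite alt_b odd_tperm; set c := (-1) ^+ (ord0 != i).
have c2 : c * c = 1 by rewrite -signr_addb addbb.
set x := (-1) ^+ _; set A := a _; set B := b _.
by rewrite -[RHS]mul1r -c2; ring.
Qed.

(* Group the permutations by the slot they send to position 0; by alternation, all
   slots of the same factor contribute equally. *)
Lemma sum_wedge_term_split u :
  \sum_(s : 'S_(p.+1 + q.+1)) wedge_term u s =
  p.+1%:R * \sum_(s : 'S_(p.+1 + q.+1) | s (lshift q.+1 (ord0 : 'I_p.+1)) == ord0) wedge_term u s +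
  q.+1%:R * \sum_(s : 'S_(p.+1 + q.+1) | s (rshift p.+1 (ord0 : 'I_q.+1)) == ord0) wedge_term u s.
Proof.
rewrite (partition_big (fun s : 'S_(p.+1 + q.+1) => (s^-1)%g ord0) xpredT) //=.
have invE (k : 'I_(p.+1 + q.+1)) (s : 'S_(p.+1 + q.+1)) : ((s^-1)%g ord0 == k) = (s k == ord0).
  by apply/eqP/eqP => [<-|<-]; rewrite ?permKV ?permK.
rewrite big_split_ord /=; congr (_ + _).
  rewrite (eq_bigr (fun _ => \sum_(s : 'S_(p.+1 + q.+1) | s (lshift q.+1 (ord0 : 'I_p.+1)) == ord0)
                               wedge_term u s)); first by rewrite sumr_const card_ord mulr_natl.
  by move=> i _; rewrite -(sum_wedge_term_lslot u i); apply: eq_bigl => s; exact: invE.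
rewrite (eq_bigr (fun _ => \sum_(s : 'S_(p.+1 + q.+1) | s (rshift p.+1 (ord0 : 'I_q.+1)) == ord0)
                             wedge_term u s)); first by rewrite sumr_const card_ord mulr_natl.
by move=> i _; rewrite -(sum_wedge_term_rslot u i); apply: eq_bigl => s; exact: invE.
Qed.

Lemma wedge_term_lift_lslot j (t : {ffun 'I_(p + q.+1) -> 'I_n}) (s : 'S_(p + q.+1)) :
  wedge_term (idxcons j t) (lift_perm (lshift q.+1 (ord0 : 'I_p.+1)) ord0 s) =
  (-1) ^+ odd_perm s * a (idxcons j [ffun i => t (s (lshift q.+1 i))]) *
    b [ffun i => t (s (rshift p i))].
Proof.
rewrite /wedge_term odd_lift_perm /=; congr (_ * a _ * b _); apply/ffunP => i; rewrite !ffunE.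
  case: (unliftP ord0 i) => [i'|] -> /=; last by rewrite lift_perm_id unlift_none.
  have -> : lshift q.+1 (lift ord0 i') = lift (lshift q.+1 (ord0 : 'I_p.+1)) (lshift q.+1 i').
    exact: val_inj.
  by rewrite lift_perm_lift liftK ffunE.
have -> : rshift p.+1 i = lift (lshift q.+1 (ord0 : 'I_p.+1)) (rshift p i) by exact: val_inj.
by rewrite lift_perm_lift liftK.
Qed.

Lemma wedge_term_lift_rslot j (t : {ffun 'I_(p + q.+1) -> 'I_n}) (s : 'S_(p + q.+1)) :
  wedge_term (idxcons j t) (lift_perm (rshift p.+1 (ord0 : 'I_q.+1)) ord0 s) =
  (-1) ^+ (odd p.+1 (+) odd_perm s) *
    a [ffun i => t (s (cast_ord (addSnnS p q) (lshift q i)))] *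
    b (idxcons j [ffun i => t (s (cast_ord (addSnnS p q) (rshift p.+1 i)))]).
Proof.
rewrite /wedge_term odd_lift_perm /= addn0 addbF; congr (_ * a _ * b _).
  apply/ffunP => i; rewrite !ffunE.
  have -> : lshift q.+1 i =
      lift (rshift p.+1 (ord0 : 'I_q.+1)) (cast_ord (addSnnS p q) (lshift q i)).
    apply: val_inj; rewrite /= /bump /=.
    by rewrite leqNgt (leq_trans (ltn_ord i) (leq_addr _ _)).
  by rewrite lift_perm_lift liftK.
apply/ffunP => i; rewrite !ffunE; case: (unliftP ord0 i) => [i'|] -> /=; last first.
  by rewrite lift_perm_id unlift_none.
have -> : rshift p.+1 (lift ord0 i') =
    lift (rshift p.+1 (ord0 : 'I_q.+1)) (cast_ord (addSnnS p q) (rshift p.+1 i')).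
  by apply: val_inj; rewrite /= /bump /= leq_add2l leq0n /= add1n addnS addSn add1n.
by rewrite lift_perm_lift liftK ffunE.
Qed.

Lemma intp_wedge (X : 'rV[R]_n) t :
  intp X (wedge a b) t = wedge (intp X a) b t +
    (-1) ^+ p.+1 * wedge a (intp X b) (castidx (addSnnS p q) t).
Proof.
set c := (((p.+1)`! * (q.+1)`!)%:R)^-1 : R.
have c_p : c * p.+1%:R = ((p`! * (q.+1)`!)%:R)^-1.
  by rewrite /c factS -mulnA natrM invfM mulrAC mulVf ?mul1r ?pnatr_eq0.
have c_q : c * q.+1%:R = (((p.+1)`! * q`!)%:R)^-1.
  by rewrite /c (factS q) mulnCA natrM invfM mulrAC mulVf ?mul1r ?pnatr_eq0.
transitivity
  (\sum_j X 0 j * (c * \sum_(s : 'S_(p.+1 + q.+1)) wedge_term (idxcons j t) s)) => //.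
under eq_bigr => j _ do rewrite sum_wedge_term_split !sum_lift_perm
   (eq_bigr _ (fun s _ => wedge_term_lift_lslot j t s))
   (eq_bigr _ (fun s _ => wedge_term_lift_rslot j t s)) !mulrDr.
rewrite wedge_castidx /wedge /intp big_split; congr (_ + _).
  rewrite [RHS]big_distrr.
  under [RHS]eq_bigr => s _ do rewrite ?big_distrr ?big_distrl ?big_distrr /=.
  rewrite exchange_big; apply: eq_bigr => j _ /=.
  rewrite !big_distrr; apply: eq_bigr => s _ /=.
  rewrite -c_p; set x := (-1) ^+ _; set A := a _; set B := b _; ring.
rewrite [in RHS]big_distrr [in RHS]big_distrr.
under [RHS]eq_bigr => s _ do rewrite ?big_distrr ?big_distrl ?big_distrr /=.
rewrite exchange_big; apply: eq_bigr => j _ /=.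
rewrite !big_distrr; apply: eq_bigr => s _ /=.
rewrite -c_q signr_addb -(signr_odd _ p.+1) /=.
set x := (-1) ^+ odd_perm _; set y := (-1) ^+ (~~ odd p); set A := a _; set B := b _; ring.
Qed.

End Leibniz.

(* The rotation k |-> k + 3 (mod 5), a product of four transpositions. *)
Definition rot3 : 'S_5 :=
  let o k (lt_k5 : (k < 5)%N) : 'I_5 := Ordinal lt_k5 in
  (tperm (o 0%N isT) (o 3%N isT) * tperm (o 0%N isT) (o 1%N isT) *
   tperm (o 0%N isT) (o 4%N isT) * tperm (o 0%N isT) (o 2%N isT))%g.

Lemma odd_rot3 : odd_perm rot3 = false.
Proof. by rewrite /rot3 !odd_permM !odd_tperm. Qed.

Lemma rot3_lshift (i : 'I_2) : rot3 (lshift 3 i) = rshift 3 i.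
Proof. by apply: val_inj; rewrite /rot3 !permM; case: i => [[|[|?]] ?] //; rewrite !permE. Qed.

Lemma rot3_rshift (i : 'I_3) : rot3 (rshift 2 i) = lshift 2 i.
Proof. by apply: val_inj; rewrite /rot3 !permM; case: i => [[|[|[|?]]] ?] //; rewrite !permE. Qed.

Section Contraction.
Variables (R : realType) (n : nat) (g : 'M[R]_n).

Lemma wedgeC_32 (a : kform R n 3) (b : kform R n 2) t : wedge a b t = wedge b a t.
Proof.
rewrite /wedge mulnC; congr (_ * _); apply/esym.
rewrite (reindex_inj (mulgI rot3)); apply: eq_bigr => s _.
rewrite odd_permM odd_rot3 /= mulrAC.
congr (_ * a _ * b _); apply/ffunP => i; rewrite !ffunE permM.
  by rewrite rot3_rshift.
by rewrite rot3_lshift.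
Qed.

Lemma contrC_32 (g_sym : g^T = g) (A : 'I_n -> kform R n 3) (B : 'I_n -> kform R n 2) t :
  contr g A B t = contr g B A t.
Proof.
rewrite /contr exchange_big; apply: eq_bigr => K _; apply: eq_bigr => L _ /=.
by rewrite wedgeC_32 -[in LHS](trmxK g) -trmx_inv g_sym mxE.
Qed.

Lemma contr_oppl p q (A A' : 'I_n -> kform R n p) (B : 'I_n -> kform R n q) t :
  (forall L t, A L t = - A' L t) -> contr g A B t = - contr g A' B t.
Proof.
move=> AN; rewrite /contr -sumrN; apply: eq_bigr => L _; rewrite -sumrN.
apply: eq_bigr => K _; rewrite /wedge -!mulrN -sumrN; congr (_ * (_ * _)).
by apply: eq_bigr => s _; rewrite AN mulrN mulNr.
Qed.

Lemma intp_contr p q (A : 'I_n -> kform R n p.+1) (B : 'I_n -> kform R n q.+1)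
    (altA : forall L, alternating (A L)) (altB : forall K, alternating (B K))
    (X : 'rV[R]_n) t :
  intp X (contr g A B) t = contr g (fun L => intp X (A L)) B t +
    (-1) ^+ p.+1 * contr g A (fun K => intp X (B K)) (castidx (addSnnS p q) t).
Proof.
transitivity (\sum_(L < n) \sum_(K < n) invmx g L K * intp X (wedge (A L) (B K)) t).
  rewrite /intp /contr.
  under eq_bigr => j _ do rewrite big_distrr.
  rewrite exchange_big; apply: eq_bigr => L _.
  under eq_bigr => j _ do rewrite big_distrr.
  rewrite exchange_big; apply: eq_bigr => K _.
  by rewrite big_distrr; apply: eq_bigr => j _ /=; rewrite mulrCA.
rewrite /contr big_distrr -big_split; apply: eq_bigr => L _ /=.
rewrite big_distrr -big_split; apply: eq_bigr => K _ /=.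
by rewrite intp_wedge // mulrDr; congr (_ + _); exact: mulrCA.
Qed.

End Contraction.

Lemma sym_antisym_eq0 (T : Type) (R : numDomainType) (f : T -> T -> T -> R) :
  (forall x y z, f x y z = f z y x) -> (forall x y z, f x y z = - f y x z) ->
  forall x y z, f x y z = 0.
Proof.
move=> f13 f12 x y z.
have fN : f x y z = - f x y z.
  by rewrite [in LHS]f13 [in LHS]f12 [in LHS]f13 [in LHS]f12 [in LHS]f13 [in LHS]f12 !opprK.
by apply/eqP; rewrite -eqNr -fN.
Qed.

Theorem mainTheorem10 (R : realType) (n : nat) (g : 'M[R]_n)
  (g_sym : g^T = g) (g_nondeg : g \in unitmx)
  (F : kform R n 5) (F_alt : alternating F)
  (H1 : forall X Y : 'rV[R]_n, forall t,
     contr g (fun L => intp X (lowerL F L)) (fun L => intp Y (lowerL F L)) t = 0)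
  (H2 : forall X : 'rV[R]_n, forall t,
     contr g (fun L => intp X (lowerL F L)) (fun L => lowerL F L) t = 0) :
  (forall X Y : 'rV[R]_n, forall t,
     contr g (fun L => intp Y (intp X (lowerL F L))) (fun L => lowerL F L) t = 0) /\
  (forall X Y Z : 'rV[R]_n, forall t,
     contr g (fun L => intp Z (intp Y (intp X (lowerL F L)))) (fun L => lowerL F L) t = 0).
Proof.
have altF L : alternating (lowerL F L) := alternating_intp _ F_alt.
have altFX X L := alternating_intp X (altF L).
have claim1 X Y t :
    contr g (fun L => intp Y (intp X (lowerL F L))) (fun L => lowerL F L) t = 0.
  have := intp_contr g (altFX X) altF Y t.
  rewrite intp_eq0; last exact: H2.
  by rewrite castidx_id H1 mulr0 addr0 => <-.
split=> //.
pose A t X Y Z :=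
  contr g (fun L => intp Y (intp X (lowerL F L))) (fun L => intp Z (lowerL F L)) t.
have claim2E X Y Z t :
    contr g (fun L => intp Z (intp Y (intp X (lowerL F L)))) (fun L => lowerL F L) t =
    - A t X Y Z.
  have := intp_contr g (fun L => alternating_intp Y (altFX X L)) altF Z t.
  rewrite intp_eq0; last exact: claim1.
  by rewrite castidx_id -signr_odd /= mul1r => /esym/eqP; rewrite addr_eq0 => /eqP.
have A_sym t X Y Z : A t X Y Z = A t Z Y X.
  have := intp_contr g (altFX X) (altFX Z) Y t.
  rewrite intp_eq0; last exact: H1.
  rewrite castidx_id -signr_odd /= expr1 mulN1r => /esym/eqP.
  by rewrite subr_eq0 /A => /eqP ->; rewrite contrC_32.
have A_anti t X Y Z : A t X Y Z = - A t Y X Z.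
  by apply: contr_oppl => L u; apply: intp_swap.
by move=> X Y Z t; rewrite claim2E (sym_antisym_eq0 (A_sym t) (A_anti t)) oppr0.
Qed.
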